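(* Let $n\ge 1$, let $\delta>0$, let $\hat{\mathbf{B}}_t\in\mathbb{R}^{n\times n}$ be a symmetric positive definite matrix, and let $\mathbf{v}_t,\hat{\mathbf{r}}_t\in\mathbb{R}^n$. Consider the semidefinite program \[ \hat{\mathbf{B}}_{t+1}=\operatorname*{argmin}_{\mathbf{Z}}\ \operatorname{tr}\!\left[\hat{\mathbf{B}}_t^{-1}(\mathbf{Z}-\delta\mathbf{I})\right]-\log\det\!\left[\hat{\mathbf{B}}_t^{-1}(\mathbf{Z}-\delta\mathbf{I})\right]-n \quad\text{s.t.}\quad \mathbf{Z}\mathbf{v}_t=\hat{\mathbf{r}}_t,\ \ \mathbf{Z}\succeq\mathbf{0}, \] where $\mathbf{Z}$ ranges over symmetric $n\times n$ matrices (with the objective defined where $\mathbf{Z}-\delta\mathbf{I}\succ\mathbf{0}$). Define the corrected gradient variation $\tilde{\mathbf{r}}_t:=\hat{\mathbf{r}}_t-\delta\mathbf{v}_t$. If $\tilde{\mathbf{r}}_t^T\mathbf{v}_t=(\hat{\mathbf{r}}_t-\delta\mathbf{v}_t)^T\mathbf{v}_t>0$, then the solution $\hat{\mathbf{B}}_{t+1}$ of this program can be written as \[ \hat{\mathbf{B}}_{t+1}=\hat{\mathbf{B}}_t+\frac{\tilde{\mathbf{r}}_t\tilde{\mathbf{r}}_t^T}{\mathbf{v}_t^T\tilde{\mathbf{r}}_t}-\frac{\hat{\mathbf{B}}_t\mathbf{v}_t\mathbf{v}_t^T\hat{\mathbf{B}}_t}{\mathbf{v}_t^T\hat{\mathbf{B}}_t\mathbf{v}_t}+\delta\mathbf{I}.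 \]
   Context: $\mathbf{I}$ denotes the $n\times n$ identity matrix; $\succeq$ and $\succ$ denote the positive semidefinite and positive definite orders on symmetric matrices. *)

From HB Require Import structures.
From mathcomp Require Import all_boot all_order all_algebra.
From mathcomp Require Import reals exp.
Set Implicit Arguments. Unset Strict Implicit. Unset Printing Implicit Defensive.
Import Order.TTheory GRing.Theory Num.Theory.
Local Open Scope ring_scope.

Definition bilin {R : realType} {n : nat} (x : 'cV[R]_n) (A : 'M[R]_n) (y : 'cV[R]_n) : R :=
  (x^T *m A *m y) ord0 ord0.

Definition dotv {R : realType} {n : nat} (x y : 'cV[R]_n) : R := (x^T *m y) ord0 ord0.

Definition symmetric_mx {R : realType} {n : nat} (A : 'M[R]_n) : Prop := A^T = A.

Definition psd_mx {R : realType} {n : nat} (A : 'M[R]_n) : Prop :=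
  symmetric_mx A /\ forall x : 'cV[R]_n, 0 <= bilin x A x.

Definition pd_mx {R : realType} {n : nat} (A : 'M[R]_n) : Prop :=
  symmetric_mx A /\ forall x : 'cV[R]_n, x != 0 -> 0 < bilin x A x.

Definition sdp_obj {R : realType} {n : nat} (delta : R) (B Z : 'M[R]_n) : R :=
  let M := invmx B *m (Z - delta%:M) in
  \tr M - ln (\det M) - n%:R.

Definition sdp_feasible {R : realType} {n : nat} (delta : R) (v r : 'cV[R]_n) (Z : 'M[R]_n) : Prop :=
  symmetric_mx Z /\ Z *m v = r /\ psd_mx Z /\ pd_mx (Z - delta%:M).

From HB Require Import structures.
From mathcomp Require Import all_boot all_order all_algebra.
From mathcomp Require Import reals exp.
From mathcomp Require Import lra ring.
Set Implicit Arguments. Unset Strict Implicit. Unset Printing Implicit Defensive.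
Import Order.TTheory GRing.Theory Num.Theory.
Local Open Scope ring_scope.

(* Bn - δI is the BFGS update W of B for the pair (v, r - δ v).  For a feasible Z, both W and
   W' := Z - δI are positive definite and map v to r - δ v, so D := W' - W kills v.  Since
   W B^-1 - I is a sum of two rank-one terms, each with zero trace against W^-1 D, the trace part
   of the objective gap is tr(W^-1 D), and the gap is Stein's loss
   tr(W^-1 W') - n - ln det(W^-1 W').  After a congruence taking W to I this is
   tr S - n - ln det S for a positive definite S, which is positive unless S = I by
   ln a <= a - 1 applied along the Schur-complement recursion. *)

Section Bilin.
Variables (R : realType) (n : nat).
Implicit Types (x y z : 'cV[R]_n) (A : 'M[R]_n).

Lemma dotvC x y : dotv x y = dotv y x.
Proof. by rewrite /dotv -[x^T *m y]trmxK trmx_mul trmxK mxE. Qed.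

Lemma dotvZl x y c : dotv (c *: x) y = c * dotv x y.
Proof. by rewrite /dotv linearZ /= -scalemxAl mxE. Qed.

Lemma dotvvE x : dotv x x = \sum_i x i 0 ^+ 2.
Proof. by rewrite /dotv mxE; apply: eq_bigr => i _; rewrite mxE expr2. Qed.

Lemma dotvv_ge0 x : 0 <= dotv x x.
Proof. by rewrite dotvvE sumr_ge0 // => i _; rewrite sqr_ge0. Qed.

Lemma dotvv_eq0 x : (dotv x x == 0) = (x == 0).
Proof.
apply/idP/eqP => [|->]; last by rewrite /dotv mulmx0 mxE.
rewrite dotvvE psumr_eq0 => [/allP x2_0|i _]; last by rewrite sqr_ge0.
apply/matrixP => i j; rewrite ord1 mxE.
by have := x2_0 i (mem_index_enum i); rewrite /= sqrf_eq0 => /eqP.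
Qed.

Lemma bilinC x y A : symmetric_mx A -> bilin x A y = bilin y A x.
Proof.
move=> SA; rewrite /bilin -[x^T *m A *m y]trmxK [in LHS]mxE.
by rewrite !trmx_mul trmxK SA mulmxA.
Qed.

Lemma bilinDl x y z A : bilin (x + y) A z = bilin x A z + bilin y A z.
Proof. by rewrite /bilin raddfD /= !mulmxDl mxE. Qed.

Lemma bilinDr x y z A : bilin z A (x + y) = bilin z A x + bilin z A y.
Proof. by rewrite /bilin !mulmxDr mxE. Qed.

Lemma bilinZl x z A c : bilin (c *: x) A z = c * bilin x A z.
Proof. by rewrite /bilin linearZ /= -!scalemxAl mxE. Qed.

Lemma bilinZr x z A c : bilin z A (c *: x) = c * bilin z A x.
Proof. by rewrite /bilin -!scalemxAr mxE. Qed.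

Lemma bilinNl x z A : bilin (- x) A z = - bilin x A z.
Proof. by rewrite -scaleN1r bilinZl mulN1r. Qed.

Lemma bilinNr x z A : bilin z A (- x) = - bilin z A x.
Proof. by rewrite -scaleN1r bilinZr mulN1r. Qed.

Lemma bilin0l y A : bilin 0 A y = 0.
Proof. by rewrite /bilin trmx0 !mul0mx mxE. Qed.

Lemma bilinDm x y A A' : bilin x (A + A') y = bilin x A y + bilin x A' y.
Proof. by rewrite /bilin mulmxDr mulmxDl mxE. Qed.

Lemma bilinNm x y A : bilin x (- A) y = - bilin x A y.
Proof. by rewrite /bilin mulmxN mulNmx mxE. Qed.

Lemma bilinZm x y A c : bilin x (c *: A) y = c * bilin x A y.
Proof. by rewrite /bilin -scalemxAr -scalemxAl mxE. Qed.

Lemma bilin_scalar x y c : bilin x c%:M y = c * dotv x y.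
Proof. by rewrite /bilin mul_mx_scalar -scalemxAl mxE. Qed.

Lemma bilin_rank1 x y a b : bilin x (a *m b^T) y = dotv x a * dotv b y.
Proof.
rewrite /bilin /dotv mulmxA -mulmxA [x^T *m a]mx11_scalar [b^T *m y]mx11_scalar.
by rewrite -scalar_mxM !mxE !eqxx !mulr1n.
Qed.

Lemma bilin_congr A P x : bilin x (P^T *m A *m P) x = bilin (P *m x) A (P *m x).
Proof. by rewrite /bilin trmx_mul !mulmxA. Qed.

(* Cauchy-Schwarz, through the vector [bilin y A y *: x - bilin x A y *: y]. *)
Lemma pd_cauchy_schwarz A x y : pd_mx A -> y != 0 ->
  bilin x A y ^+ 2 <= bilin x A x * bilin y A y ?= iff
  (bilin y A y *: x == bilin x A y *: y).
Proof.
move=> [SA PA] y0; set a := bilin y A y; set q := bilin x A y.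
have a0 : 0 < a by exact: PA.
set u := a *: x - q *: y.
have uAu : bilin u A u = a * (bilin x A x * a - q ^+ 2).
  rewrite /u !bilinDl !bilinDr !bilinNl !bilinNr !bilinZl !bilinZr.
  rewrite [bilin y A x]bilinC // -/q -/a; ring.
have gap_ge0 : 0 <= bilin x A x * a - q ^+ 2.
  case: (eqVneq u 0) => [u0|u0].
    by move: uAu; rewrite u0 bilin0l => /esym/eqP; rewrite mulf_eq0 gt_eqF //= => /eqP ->.
  by rewrite -(pmulr_rge0 _ a0) -uAu ltW // PA.
split; first by rewrite -subr_ge0.
have -> : (q ^+ 2 == bilin x A x * a) = (bilin x A x * a - q ^+ 2 == 0).
  by rewrite subr_eq0 eq_sym.
rewrite -[a *: x == _]subr_eq0 -/u; apply/eqP/eqP => [gap0|u0].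
  by apply/eqP/contraT => /PA; rewrite uAu gap0 mulr0 ltxx.
by move: uAu; rewrite u0 bilin0l => /esym/eqP; rewrite mulf_eq0 gt_eqF //= => /eqP.
Qed.

End Bilin.

Section PosDef.
Variable R : realType.

Lemma pd_unitmx n (A : 'M[R]_n) : pd_mx A -> A \in unitmx.
Proof.
move=> [_ PA]; rewrite -row_free_unit; apply: inj_row_free => w wA0.
apply/eqP/contraT => w0; have := PA w^T; rewrite trmx_eq0 => /(_ w0).
by rewrite /bilin trmxK wA0 mul0mx mxE ltxx.
Qed.

Lemma pd_congr n (A P : 'M[R]_n) : pd_mx A -> P \in unitmx -> pd_mx (P^T *m A *m P).
Proof.
move=> [SA PA] UP; split; first by rewrite /symmetric_mx !trmx_mul trmxK SA mulmxA.
move=> x x0; rewrite bilin_congr; apply: PA; apply: contra x0 => /eqP Px0.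
by rewrite -(mulKmx UP x) Px0 mulmx0.
Qed.

Lemma pd_block_diag m n (A : 'M[R]_m) (D : 'M[R]_n) :
  pd_mx (block_mx A 0 0 D) -> pd_mx A /\ pd_mx D.
Proof.
move=> [S P]; have [SA _ _ SD] := eq_block_mx (etrans (esym (tr_block_mx A 0 0 D)) S).
split; split=> // x x0.
- have := P (col_mx x 0); rewrite col_mx_eq0 negb_and x0 => /(_ isT).
  by rewrite /bilin tr_col_mx trmx0 mul_row_block !mul0mx !addr0 mul_row_col mulmx0 addr0.
- have := P (col_mx 0 x); rewrite col_mx_eq0 negb_and x0 orbT => /(_ isT).
  by rewrite /bilin tr_col_mx trmx0 mul_row_block !mul0mx !add0r mul_row_col mulmx0 add0r.
Qed.

(* One step of symmetric Gaussian elimination: a unimodular congruence E clears the first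
   row and column, leaving the Schur complement of the pivot [a]. *)
Lemma pd_schur n (S : 'M[R]_(1 + n)) : pd_mx S ->
  exists a (b : 'M[R]_(1, n)) (D : 'M[R]_n) (E : 'M[R]_(1 + n)),
  [/\ S = block_mx a%:M b b^T D, 0 < a, \det E = 1,
      E^T *m S *m E = block_mx a%:M 0 0 (D - a^-1 *: (b^T *m b)) &
      pd_mx (D - a^-1 *: (b^T *m b))].
Proof.
move=> PS; set a := ulsubmx S 0 0; set b := ursubmx S; set D := drsubmx S.
have ES : S = block_mx a%:M b b^T D.
  by rewrite -{1}[S]submxK /b trmx_ursub PS.1 [ulsubmx S]mx11_scalar.
have a0 : 0 < a.
  have := PS.2 (col_mx 1%:M 0); rewrite col_mx_eq0 oner_eq0 => /(_ isT).
  rewrite {1}ES /bilin tr_col_mx trmx0 mul_row_block !mul0mx !addr0 mul_row_col.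
  by rewrite mulmx0 addr0 trmx1 mul1mx mulmx1 mxE eqxx.
set E : 'M[R]_(1 + n) := block_mx 1%:M (- a^-1 *: b) 0 1%:M.
have detE : \det E = 1 by rewrite det_ublock !det1 mulr1.
have EtSE : E^T *m S *m E = block_mx a%:M 0 0 (D - a^-1 *: (b^T *m b)).
  rewrite /E ES tr_block_mx !trmx1 trmx0 !mulmx_block !mul1mx !mulmx1 !mul0mx !mulmx0.
  have -> : (- a^-1 *: b)^T = - a^-1 *: b^T by rewrite linearZ.
  rewrite !addr0 mul_scalar_mx mul_mx_scalar !scalerA mulrN mulfV ?gt_eqF //.
  by rewrite !scaleN1r !addNr mul0mx add0r -scalemxAl scaleNr addrC.
exists a, b, D, E; split=> //.
have UE : E \in unitmx by rewrite unitmxE detE unitr1.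
by have := pd_congr PS UE; rewrite EtSE => /pd_block_diag [].
Qed.

Lemma pd_congr_eq1 n (A : 'M[R]_n) : pd_mx A ->
  exists2 P : 'M[R]_n, P \in unitmx & P^T *m A *m P = 1%:M.
Proof.
elim: n A => [|n IH] A PA.
  exists 1%:M; first by rewrite unitmxE det_mx00 unitr1.
  by rewrite (flatmx0 (_ *m _)) (flatmx0 1%:M).
have [a [b [D [E [_ a0 detE EtAE PC]]]]] := pd_schur PA.
have [Q UQ QtCQ] := IH _ PC.
set s := (Num.sqrt a)^-1.
have sas : s * a * s = 1.
  by rewrite mulrAC -expr2 exprVn sqr_sqrtr ?ltW // mulVf ?gt_eqF.
set F : 'M[R]_(1 + n) := block_mx s%:M 0 0 Q.
exists (E *m F).
  rewrite unitmx_mul !unitmxE detE unitr1 (det_ublock (s%:M : 'M_1)) det_scalar1.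
  by rewrite unitrM -unitmxE UQ unitfE invr_eq0 gt_eqF ?sqrtr_gt0.
have -> : (E *m F)^T *m A *m (E *m F) = F^T *m (E^T *m A *m E) *m F.
  by rewrite trmx_mul !mulmxA.
rewrite EtAE /F tr_block_mx tr_scalar_mx !trmx0 !mulmx_block.
rewrite ?mul0mx ?mulmx0 ?addr0 ?add0r -!scalar_mxM sas (mul0mx _ Q) (mul0mx _ s%:M) QtCQ.
exact: (esym (scalar_mx_block 1 n 1)).
Qed.

Lemma pd_det_gt0 n (A : 'M[R]_n) : pd_mx A -> 0 < \det A.
Proof.
move=> /pd_congr_eq1 [P UP PtAP]; have := congr1 determinant PtAP.
rewrite !det_mulmx det_tr det1 mulrAC => detPPA.
have detPP : 0 < \det P * \det P by rewrite -expr2 exprn_even_gt0 // -unitfE -unitmxE.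
by rewrite -(pmulr_rgt0 _ detPP) detPPA ltr01.
Qed.

Lemma ln_le_subr1 (a : R) : 0 < a -> ln a <= a - 1 ?= iff (a == 1).
Proof.
move=> a0; apply/leifP; have [->|a1] := eqVneq a 1; first by rewrite ln1 subrr.
have : ln a != 0 by rewrite ln_eq0.
by move=> /expR_gt1Dx; rewrite lnK ?posrE //; lra.
Qed.

(* The matrix form of [ln a <= a - 1]: for S = diag(a, C) up to a unimodular congruence,
   ln det S = ln a + ln det C while tr S - (n + 1) exceeds (a - 1) + (tr C - n) by the
   nonnegative term b b^T / a. *)
Lemma pd_ln_det_le_tr n (S : 'M[R]_n) : pd_mx S ->
  ln (\det S) <= \tr S - n%:R ?= iff (S == 1%:M).
Proof.
elim: n S => [|n IH] S PS.
  by rewrite det_mx00 ln1 /mxtrace big_ord0 subrr (flatmx0 S) (flatmx0 1%:M) eqxx; apply/leifP.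
have [a [b [D [E [ES a0 detE EtSE PC]]]]] := pd_schur PS.
set C := D - a^-1 *: (b^T *m b) in EtSE PC.
have detS : \det S = a * \det C.
  have := congr1 determinant EtSE.
  by rewrite !det_mulmx det_tr detE mulr1 mul1r det_ublock det_scalar1.
set t := dotv b^T b^T.
have trS : \tr S - n.+1%:R = (a - 1) + (\tr C - n%:R) + a^-1 * t.
  have := mxtrace_block (a%:M : 'M_1) b b^T D; rewrite mxtrace_scalar -ES => ->.
  rewrite /C raddfB /= mxtraceZ mxtrace_mulC /t /dotv trmxK /mxtrace big_ord1 mulrSr.
  by ring.
have t_leif : 0 <= a^-1 * t ?= iff (b == 0).
  have -> : (b == 0) = (0 == a^-1 * t).
    by rewrite [RHS]eq_sym mulf_eq0 invr_eq0 gt_eqF //= dotvv_eq0 trmx_eq0.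
  by apply/leif_eq/mulr_ge0; [rewrite invr_ge0 ltW | apply: dotvv_ge0].
have := leifD (leifD (ln_le_subr1 a0) (IH _ PC)) t_leif.
rewrite addr0 -lnM ?posrE ?pd_det_gt0 // -detS -trS.
congr (_ <= _ ?= iff _); rewrite ES [in RHS](scalar_mx_block 1 n 1).
have [b0 | b0] := eqVneq b 0; last first.
  rewrite andbF; apply/esym/negbTE; apply: contra b0 => /eqP eqS.
  by have [_ -> _ _] := @eq_block_mx _ 1 n 1 n _ _ _ _ _ _ _ _ eqS.
rewrite /C b0 trmx0 mul0mx scaler0 subr0 andbT.
apply/andP/eqP => [[/eqP-> /eqP->] // | eqS].
have [a1 _ _ ->] := @eq_block_mx _ 1 n 1 n _ _ _ _ _ _ _ _ eqS; split=> //.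
by move/(congr1 (fun M : 'M_1 => M 0 0)): a1; rewrite !mxE eqxx !mulr1n => ->.
Qed.

Lemma congr_mx_eq n (P A A' : 'M[R]_n) : P \in unitmx ->
  (P^T *m A *m P == P^T *m A' *m P) = (A == A').
Proof.
move=> UP; apply/eqP/eqP => [|-> //]; have UPt : P^T \in unitmx by rewrite unitmx_tr.
move=> /(congr1 (fun M => invmx P^T *m M *m invmx P)).
by rewrite !mulmxA !mulVmx // !mul1mx -!mulmxA !mulmxV // !mulmx1.
Qed.

Lemma pd_ln_det_invmx_le_tr n (W W' : 'M[R]_n) : pd_mx W -> pd_mx W' ->
  ln (\det (invmx W *m W')) <= \tr (invmx W *m W') - n%:R ?= iff (W' == W).
Proof.
move=> PW PW'; have [P UP PtWP] := pd_congr_eq1 PW.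
have invW : invmx W = P *m P^T.
  have PPtW : P *m P^T *m W = 1%:M.
    by rewrite -(mulmxK UP (P *m P^T *m W)) -(mulmxA P) -(mulmxA P) PtWP mulmx1 mulmxV.
  by rewrite -[LHS]mul1mx -PPtW -(mulmxA _ W) mulmxV ?mulmx1 // pd_unitmx.
have := pd_ln_det_le_tr (pd_congr PW' UP).
have -> : \tr (P^T *m W' *m P) = \tr (invmx W *m W') by rewrite invW mxtrace_mulC mulmxA.
have -> : \det (P^T *m W' *m P) = \det (invmx W *m W').
  by rewrite invW !det_mulmx det_tr; ring.
by rewrite -PtWP congr_mx_eq.
Qed.

End PosDef.

Definition bfgs_update (R : realType) n (B : 'M[R]_n) (s y : 'cV[R]_n) : 'M[R]_n :=
  B + (dotv s y)^-1 *: (y *m y^T) - (bilin s B s)^-1 *: (B *m s *m s^T *m B).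

Section BFGS.
Variables (R : realType) (n : nat) (B : 'M[R]_n) (s y : 'cV[R]_n).
Hypotheses (PB : pd_mx B) (sy_gt0 : 0 < dotv s y).

Let s_neq0 : s != 0.
Proof. by apply: contraTneq sy_gt0 => ->; rewrite /dotv trmx0 mul0mx mxE ltxx. Qed.

Let sBs_gt0 : 0 < bilin s B s.
Proof. exact: PB.2. Qed.

Local Notation W := (bfgs_update B s y).

Lemma bfgs_secant : W *m s = y.
Proof.
have ys : y^T *m s = (dotv s y)%:M by rewrite [LHS]mx11_scalar dotvC.
have BssBs : B *m s *m s^T *m B *m s = bilin s B s *: (B *m s).
  by rewrite -!mulmxA (mulmxA s^T) [s^T *m B *m s]mx11_scalar mul_mx_scalar scalemxAr.
rewrite /bfgs_update !mulmxDl mulNmx -!scalemxAl BssBs -mulmxA ys mul_mx_scalar.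
by rewrite !scalerA !mulVf ?gt_eqF // !scale1r addrAC subrr add0r.
Qed.

Lemma bfgs_sym : symmetric_mx W.
Proof.
have [SB _] := PB; rewrite /symmetric_mx /bfgs_update !linearD /= linearN /= !linearZ /=.
by rewrite !trmx_mul !trmxK SB !mulmxA.
Qed.

Lemma bfgs_bilin x : bilin x W x =
  bilin x B x - (bilin x B s) ^+ 2 / bilin s B s + (dotv x y) ^+ 2 / dotv s y.
Proof.
have BssB : B *m s *m s^T *m B = (B *m s) *m (B *m s)^T.
  by rewrite trmx_mul PB.1 mulmxA.
have xBs : dotv x (B *m s) = bilin x B s by rewrite /dotv mulmxA.
rewrite /bfgs_update BssB !bilinDm bilinNm !bilinZm !bilin_rank1.
by rewrite [dotv (B *m s) x]dotvC [dotv y x]dotvC xBs; ring.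
Qed.

(* Cauchy-Schwarz makes the first two terms of [bfgs_bilin] nonnegative, and they vanish only
   on the line through s, where the last term is positive because s^T y > 0. *)
Lemma bfgs_pd : pd_mx W.
Proof.
split=> [|x x0]; first exact: bfgs_sym.
set q := bilin x B s; set p := dotv x y; set X := bilin x B x; set b := bilin s B s.
have [cs_le cs_eq] := pd_cauchy_schwarz x PB s_neq0; rewrite -/q -/X -/b in cs_le cs_eq.
have cs_ge0 : 0 <= X - q ^+ 2 / b by rewrite subr_ge0 ler_pdivrMr.
have p2_ge0 : 0 <= p ^+ 2 / dotv s y by rewrite divr_ge0 ?sqr_ge0 ?ltW.
rewrite bfgs_bilin -/q -/p -/X -/b.
have [p0 | p_neq0] := eqVneq p 0; last first.
  by apply: ltr_wpDl cs_ge0 _; rewrite divr_gt0 // exprn_even_gt0.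
rewrite p0 expr0n mul0r addr0 subr_gt0 ltr_pdivrMr // lt_def cs_le andbT eq_sym cs_eq.
apply: contra x0 => /eqP bx.
have q0 : q = 0.
  have : b * p = q * dotv s y by rewrite /p -dotvZl bx dotvZl dotvC.
  by rewrite p0 mulr0 => /esym/eqP; rewrite mulf_eq0 (gt_eqF sy_gt0) orbF => /eqP.
by move: bx; rewrite q0 scale0r => /eqP; rewrite scaler_eq0 gt_eqF.
Qed.

Lemma bfgs_tr_invmx D : symmetric_mx D -> D *m s = 0 ->
  \tr (invmx B *m D) = \tr (invmx W *m D).
Proof.
move=> SD Ds0; have UB := pd_unitmx PB; have UW := pd_unitmx bfgs_pd.
have sD : s^T *m D = 0 by rewrite -SD -trmx_mul Ds0 trmx0.
have WBD : W *m (invmx B *m D) = D + (dotv s y)^-1 *: (y *m (y^T *m invmx B *m D)).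
  rewrite /bfgs_update !mulmxDl mulNmx -!scalemxAl mulKVmx // !mulmxA mulmxK //.
  by rewrite -(mulmxA _ s^T) sD mulmx0 scaler0 subr0.
have Wy : invmx W *m y = s by rewrite -[in RHS](mulKmx UW s) bfgs_secant.
rewrite -(mulKmx UW (invmx B *m D)) WBD mulmxDr raddfD /= -scalemxAr linearZ /=.
by rewrite (mulmxA (invmx W)) Wy (mxtrace_mulC s) -(mulmxA _ D) Ds0 mulmx0 linear0 mulr0 addr0.
Qed.

End BFGS.

Section SDP.
Variables (R : realType) (n : nat) (delta : R) (B : 'M[R]_n).

Lemma sdp_feasible_shift (v r : 'cV[R]_n) (W : 'M[R]_n) : 0 <= delta -> pd_mx W ->
  W *m v = r - delta *: v -> sdp_feasible delta v r (W + delta%:M).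
Proof.
move=> delta_ge0 PW Wv; have [SW _] := PW.
have SWd : symmetric_mx (W + delta%:M) by rewrite /symmetric_mx linearD /= SW tr_scalar_mx.
split=> //; split; first by rewrite mulmxDl Wv mul_scalar_mx subrK.
split; last by rewrite addrK.
split=> // x; rewrite bilinDm bilin_scalar.
have [->|x0] := eqVneq x 0; first by rewrite bilin0l /dotv trmx0 mul0mx mxE mulr0 addr0.
by rewrite addr_ge0 ?mulr_ge0 ?dotvv_ge0 // ltW // PW.2.
Qed.

Lemma sdp_obj_subr (Z Z' : 'M[R]_n) : pd_mx B ->
  pd_mx (Z - delta%:M) -> pd_mx (Z' - delta%:M) ->
  sdp_obj delta B Z' - sdp_obj delta B Z =
  \tr (invmx B *m (Z' - Z)) - ln (\det (invmx (Z - delta%:M) *m (Z' - delta%:M))).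
Proof.
move=> PB PW PW'; set W := Z - delta%:M; set W' := Z' - delta%:M.
have dB := pd_det_gt0 PB; have dW := pd_det_gt0 PW; have dW' := pd_det_gt0 PW'.
have detE : \det (invmx B *m W') = \det (invmx B *m W) * \det (invmx W *m W').
  by rewrite !det_mulmx !det_inv -mulrA mulVKf ?gt_eqF.
have ZZ' : Z' - Z = W' - W by rewrite /W /W' opprB addrA subrK.
have BW_gt0 : 0 < \det (invmx B *m W) by rewrite det_mulmx det_inv mulr_gt0 ?invr_gt0.
have WW'_gt0 : 0 < \det (invmx W *m W') by rewrite det_mulmx det_inv mulr_gt0 ?invr_gt0.
rewrite /sdp_obj /= -/W -/W' detE lnM ?posrE // ZZ' (mulmxBr (invmx B) W' W) raddfB /=.
by ring.
Qed.

End SDP.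

Theorem lemma1 (R : realType) (n : nat) (hn : (0 < n)%N) (delta : R) (hdelta : 0 < delta)
    (B : 'M[R]_n) (v r : 'cV[R]_n) :
  pd_mx B ->
  0 < dotv (r - delta *: v) v ->
  let rt := r - delta *: v in
  let Bn := B + (dotv v rt)^-1 *: (rt *m rt^T)
              - (bilin v B v)^-1 *: (B *m v *m v^T *m B) + delta%:M in
  sdp_feasible delta v r Bn /\
  (forall Z : 'M[R]_n, sdp_feasible delta v r Z -> Z != Bn ->
     sdp_obj delta B Bn < sdp_obj delta B Z).
Proof.
move=> PB rtv_gt0 rt Bn; have vrt_gt0 : 0 < dotv v rt by rewrite dotvC.
set W := bfgs_update B v rt; have PW : pd_mx W := bfgs_pd PB vrt_gt0.
have BnW : Bn = W + delta%:M by [].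
have feasBn : sdp_feasible delta v r Bn.
  by rewrite BnW; apply: sdp_feasible_shift; rewrite ?ltW ?bfgs_secant.
have [SBn [Bnv [_ PBn]]] := feasBn.
split=> // Z [SZ [Zv [_ PZ]]] Z_neq_Bn.
have WZ_neq : Z - delta%:M != W by apply: contra Z_neq_Bn; rewrite BnW subr_eq.
have SD : symmetric_mx (Z - Bn) by rewrite /symmetric_mx linearB /= SZ SBn.
have Dv : (Z - Bn) *m v = 0 by rewrite mulmxBl Zv Bnv subrr.
have invW_D : invmx W *m (Z - Bn) = invmx W *m (Z - delta%:M) - 1%:M.
  by rewrite BnW opprD addrCA addrC mulmxBr mulVmx // pd_unitmx.
rewrite -subr_gt0 sdp_obj_subr // (bfgs_tr_invmx PB vrt_gt0 SD Dv) -/W.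
have -> : Bn - delta%:M = W by rewrite BnW addrK.
rewrite invW_D raddfB /= mxtrace1.
have /leifP := pd_ln_det_invmx_le_tr PW PZ; rewrite (negbTE WZ_neq).
by rewrite subr_gt0.
Qed.
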